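(* For all integers $k,d\ge1$ there is a GJ algorithm which, given the entries of a matrix $Z\in\mathbb R^{k\times d}$ as input, outputs the entries of $Z^\dagger Z$ (the orthogonal projection onto the row space of $Z$). This algorithm has degree $O(k)$ and predicate complexity at most $2^k$. Furthermore, if $Z$ is promised to have rank $k$, there is such a GJ algorithm of degree $O(k)$ and predicate complexity $0$.
   Context: $M^\dagger$ denotes the Moore–Penrose pseudo-inverse. A GJ algorithm operates on real-valued inputs and performs only arithmetic operations $v''=v\odot v'$ with $\odot\in\{+,-,\times,\div\}$ and conditional statements ''if $v\ge0$ then ... else ...'', where $v,v'$ are inputs or previously computed values. Every value it computes is a rational function of the inputs; the degree of a rational function is the maximum of the degrees of numerator and denominator in reduced form. The degree of a GJ algorithm is the maximum degree of any rational function of the inputs it computes; its predicate complexity is the number of distinct rational functions appearing in its conditional statements. *)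

(* R is an abstract realType (MathComp-Analysis reals);
   rational functions of the inputs are represented by pairs of
   multivariate polynomials (multinomials' mpoly). *)
From HB Require Import structures.
From mathcomp Require Import all_boot all_order all_algebra.
From mathcomp Require Import reals.
From mathcomp Require Import mpoly.

Set Implicit Arguments.
Unset Strict Implicit.
Unset Printing Implicit Defensive.

Import Order.TTheory GRing.Theory Num.Theory.
Local Open Scope ring_scope.

(* Moore--Penrose pseudo-inverse (real matrices: transpose = adjoint). *)
Definition is_pinv (R : realType) (m n : nat)
    (A : 'M[R]_(m, n)) (X : 'M[R]_(n, m)) : Prop :=
  [/\ A *m X *m A = A, X *m A *m X = X,
      (A *m X)^T = A *m X & (X *m A)^T = X *m A].

Inductive gj_op := GAdd | GSub | GMul | GDiv.

(* an operand: an input x_i, or the j-th previously computed value *)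
Inductive gj_arg (n : nat) := GIn of 'I_n | GVal of nat.

Inductive gj (n : nat) (O : Type) :=
  | GOut  of (O -> gj_arg n)
  | GStep of gj_op & gj_arg n & gj_arg n & gj n O  (* v_new := a op b; continue *)
  | GIf   of gj_arg n & gj n O & gj n O.            (* if a >= 0 then p1 else p2 *)

Arguments GIn {n}.
Arguments GVal {n}.

Section Semantics.
Variables (R : realType) (n : nat) (O : Type).

Definition gj_get (x : 'I_n -> R) (vs : seq R) (a : gj_arg n) : option R :=
  match a with
  | GIn i => Some (x i)
  | GVal j => if (j < size vs)%N then Some (nth 0 vs j) else None
  end.

Definition gj_apply (o : gj_op) (u v : R) : R :=
  match o with GAdd => u + v | GSub => u - v | GMul => u * v | GDiv => u / v end.

(* None = runtime error (division by zero or reference to a value not yet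
   computed). *)
Fixpoint gj_run (x : 'I_n -> R) (vs : seq R) (p : gj n O)
    : option (O -> option R) :=
  match p with
  | GOut f => Some (fun o => gj_get x vs (f o))
  | GStep o a b p' =>
      match gj_get x vs a, gj_get x vs b with
      | Some u, Some v =>
          if (if o is GDiv then v == 0 else false) then None
          else gj_run x (rcons vs (gj_apply o u v)) p'
      | _, _ => None
      end
  | GIf a p1 p2 =>
      match gj_get x vs a with
      | Some u => if 0 <= u then gj_run x vs p1 else gj_run x vs p2
      | None => None
      end
  end.

Definition ratf := ({mpoly R[n]} * {mpoly R[n]})%type.

Definition gj_sget (vs : seq ratf) (a : gj_arg n) : option ratf :=
  match a with
  | GIn i => Some ('X_i, 1)
  | GVal j => if (j < size vs)%N then Some (nth (0, 1) vs j) else None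
  end.

Definition gj_sapply (o : gj_op) (u v : ratf) : ratf :=
  match o with
  | GAdd => (u.1 * v.2 + v.1 * u.2, u.2 * v.2)
  | GSub => (u.1 * v.2 - v.1 * u.2, u.2 * v.2)
  | GMul => (u.1 * v.1, u.2 * v.2)
  | GDiv => (u.1 * v.2, u.2 * v.1)
  end.

(* well-formedness on every computation path: references are valid and
   no division by an identically zero rational function *)
Fixpoint gj_wf (vs : seq ratf) (p : gj n O) : Prop :=
  match p with
  | GOut f => forall o, gj_sget vs (f o) <> None
  | GStep o a b p' =>
      match gj_sget vs a, gj_sget vs b with
      | Some u, Some v =>
          (o = GDiv -> v.1 <> 0) /\ gj_wf (rcons vs (gj_sapply o u v)) p'
      | _, _ => False
      end
  | GIf a p1 p2 => gj_sget vs a <> None /\ gj_wf vs p1 /\ gj_wf vs p2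
  end.

Fixpoint gj_values (vs : seq ratf) (p : gj n O) : seq ratf :=
  match p with
  | GOut _ => [::]
  | GStep o a b p' =>
      match gj_sget vs a, gj_sget vs b with
      | Some u, Some v =>
          let w := gj_sapply o u v in w :: gj_values (rcons vs w) p'
      | _, _ => [::]
      end
  | GIf _ p1 p2 => gj_values vs p1 ++ gj_values vs p2
  end.

Fixpoint gj_preds (vs : seq ratf) (p : gj n O) : seq ratf :=
  match p with
  | GOut _ => [::]
  | GStep o a b p' =>
      match gj_sget vs a, gj_sget vs b with
      | Some u, Some v => gj_preds (rcons vs (gj_sapply o u v)) p'
      | _, _ => [::]
      end
  | GIf a p1 p2 =>
      (if gj_sget vs a is Some u then [:: u] else [::])
        ++ gj_preds vs p1 ++ gj_preds vs p2
  end.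

Definition ratf_eq (u v : ratf) : Prop := u.1 * v.2 = v.1 * u.2.

(* total degree of a polynomial (0 for the zero polynomial) *)
Definition mdegree (P : {mpoly R[n]}) : nat := (msize P).-1.

(* the rational function P/Q has degree <= D: its reduced form (which is the
   representation minimising both degrees) has numerator and denominator of
   total degree <= D, i.e. some representation P'/Q' does *)
Definition ratf_deg_le (D : nat) (u : ratf) : Prop :=
  exists P Q : {mpoly R[n]},
    [/\ Q != 0, ratf_eq u (P, Q), (mdegree P <= D)%N & (mdegree Q <= D)%N].

Definition gj_degree_le (D : nat) (p : gj n O) : Prop :=
  forall u, u \in gj_values [::] p -> ratf_deg_le D u.

Definition gj_predcomp_le (c : nat) (p : gj n O) : Prop :=
  exists L : seq ratf, (size L <= c)%N /\
    forall u, u \in gj_preds [::] p -> exists2 v, v \in L & ratf_eq u v.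

End Semantics.

Definition gj_computes_pinv_proj (R : realType) (k d : nat)
    (Pr : 'M[R]_(k, d) -> Prop) (p : gj (k * d) ('I_d * 'I_d)) : Prop :=
  gj_wf (R := R) [::] p /\
  forall Z : 'M[R]_(k, d), Pr Z ->
    exists2 out, gj_run (fun i => mxvec Z 0 i) [::] p = Some out &
      exists2 X : 'M[R]_(d, k), is_pinv Z X &
        forall i j, out (i, j) = Some ((X *m Z) i j).

(* If the rows of B
   are linearly independent rows of Z spanning that space and G = B B^T is their
   Gram matrix, then Z^+ Z = B^T adj(G) B / det G: numerator and denominator are
   polynomials of degree at most 2k in the entries of Z.  Such a B is found
   greedily, row i joining the current set S of rows when det G_(S+i) <> 0; the
   test polynomial has degree at most 4k and depends only on the subset S+i of
   the k rows, so at most 2^k distinct predicates occur.  When rank Z = k all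
   rows are independent and no test is needed.  The GJ programs are obtained by
   compiling straight-line expressions for these determinants and adjugates. *)

From HB Require Import structures.
From mathcomp Require Import all_boot all_order all_algebra all_fingroup.
From mathcomp Require Import reals mpoly.
From mathcomp Require Import ring zify.

Set Implicit Arguments.
Unset Strict Implicit.
Unset Printing Implicit Defensive.

Import Order.TTheory GRing.Theory Num.Theory.
Local Open Scope ring_scope.

(** * Straight-line expressions *)

Inductive bop := BAdd | BSub | BMul.

Definition gj_op_of_bop (o : bop) : gj_op :=
  match o with BAdd => GAdd | BSub => GSub | BMul => GMul end.

Definition bop_apply (T : pzRingType) (o : bop) (u v : T) : T :=
  match o with BAdd => u + v | BSub => u - v | BMul => u * v end.

Definition bop_deg (o : bop) (a b : nat) : nat :=
  if o is BMul then (a + b)%N else maxn a b.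

(* [EOne] denotes a constant supplied at evaluation time: GJ algorithms have no
   constants, so a program provides it as the content of a designated slot. *)
Inductive expr (n : nat) := EIn of 'I_n | EOne | EBin of bop & expr n & expr n.
Arguments EOne {n}.

Section Expressions.
Variable n : nat.
Implicit Types (e : expr n) (l : seq (expr n)).

Fixpoint expr_eval (T : pzRingType) (x : 'I_n -> T) (c : T) e : T :=
  match e with
  | EIn i => x i
  | EOne => c
  | EBin o a b => bop_apply o (expr_eval x c a) (expr_eval x c b)
  end.

Fixpoint expr_deg e : nat :=
  match e with
  | EIn _ => 1
  | EOne => 0
  | EBin o a b => bop_deg o (expr_deg a) (expr_deg b)
  end.

Lemma expr_deg_EBin o a b :
  (expr_deg a <= expr_deg (EBin o a b))%N /\ (expr_deg b <= expr_deg (EBin o a b))%N.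
Proof. by case: o => /=; lia. Qed.

Lemma expr_eval_rmorph (T T' : comPzRingType) (f : {rmorphism T -> T'})
    (x : 'I_n -> T) (y : 'I_n -> T') c e :
  (forall i, f (x i) = y i) -> f (expr_eval x c e) = expr_eval y (f c) e.
Proof.
move=> fx; elim: e => [i||o a IHa b IHb] //=.
by rewrite -IHa -IHb; case: o => /=; [exact: rmorphD | exact: rmorphB | exact: rmorphM].
Qed.

Definition ezero : expr n := EBin BSub EOne EOne.

Definition esum l : expr n := foldr (EBin BAdd) ezero l.

Fixpoint eprod l : expr n :=
  match l with
  | [::] => EOne
  | [:: e] => e
  | e :: l' => EBin BMul e (eprod l')
  end.

Definition esign (b : bool) e : expr n := if b then EBin BSub ezero e else e.

Definition emulmx p q r (M : 'M[expr n]_(p, q)) (N : 'M[expr n]_(q, r)) :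
    'M[expr n]_(p, r) :=
  \matrix_(i, j) esum [seq EBin BMul (M i h) (N h j) | h <- enum 'I_q].

Definition edet r (M : 'M[expr n]_r) : expr n :=
  esum [seq esign (odd_perm s) (eprod [seq M i (s i) | i <- enum 'I_r])
       | s <- enum 'S_r].

Definition eadj r (M : 'M[expr n]_r) : 'M[expr n]_r :=
  \matrix_(i, j) esign (odd (j + i)) (edet (row' j (col' i M))).

Section Eval.
Variables (T : comPzRingType) (x : 'I_n -> T) (c : T).
Local Notation ev := (expr_eval x c).

Lemma eval_esum l : ev (esum l) = \sum_(e <- l) ev e.
Proof. by elim: l => [|e l IH]; rewrite ?big_nil ?big_cons /= ?subrr ?IH. Qed.

Lemma eval_eprod l : (size l > 0)%N || (c == 1) -> ev (eprod l) = \prod_(e <- l) ev e.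
Proof.
elim: l => [|e [|f l] IH] /=; first by move/eqP->; rewrite big_nil.
  by rewrite big_seq1.
by rewrite big_cons IH.
Qed.

Lemma eval_esign b e : ev (esign b e) = (-1) ^+ b * ev e.
Proof. by case: b; rewrite /= ?subrr ?sub0r ?mulN1r ?mul1r. Qed.

Lemma eval_emulmx p q r (M : 'M[expr n]_(p, q)) (N : 'M[expr n]_(q, r)) :
  map_mx ev (emulmx M N) = map_mx ev M *m map_mx ev N.
Proof.
apply/matrixP => i j; rewrite !mxE eval_esum big_map big_enum.
by apply: eq_bigr => h _; rewrite !mxE.
Qed.

Lemma eval_edet r (M : 'M[expr n]_r) : (r > 0)%N || (c == 1) ->
  ev (edet M) = \det (map_mx ev M).
Proof.
move=> r0_c1; rewrite eval_esum big_map big_enum.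
apply: eq_bigr => s _; rewrite eval_esign eval_eprod; last by rewrite size_map -cardE card_ord.
by rewrite big_map big_enum; congr (_ * _); apply: eq_bigr => i _; rewrite mxE.
Qed.

Lemma eval_eadj r (M : 'M[expr n]_r) : c = 1 -> map_mx ev (eadj M) = \adj (map_mx ev M).
Proof.
move=> c1; apply/matrixP => i j; rewrite !mxE /cofactor eval_esign signr_odd.
rewrite eval_edet ?c1 ?eqxx ?orbT //.
by congr (_ * \det _); apply/matrixP => a b; rewrite !mxE.
Qed.

End Eval.

Definition mx_deg_le p q (b : nat) (M : 'M[expr n]_(p, q)) :=
  forall i j, (expr_deg (M i j) <= b)%N.

Lemma expr_deg_esum b l : all (fun e => expr_deg e <= b)%N l -> (expr_deg (esum l) <= b)%N.
Proof. by elim: l => [|e l IH] //= /andP[le /IH]; rewrite geq_max le. Qed.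

Lemma expr_deg_eprod b l : all (fun e => expr_deg e <= b)%N l ->
  (expr_deg (eprod l) <= b * size l)%N.
Proof.
elim: l => [|e [|f l] IH] //; first by rewrite /= muln1 andbT.
by move=> /andP[le /IH le']; rewrite mulnS; apply: leq_add le le'.
Qed.

Lemma expr_deg_esign b e : expr_deg (esign b e) = expr_deg e.
Proof. by case: b => //=; rewrite !max0n. Qed.

Lemma mx_deg_le_tr p q b (M : 'M[expr n]_(p, q)) : mx_deg_le b M -> mx_deg_le b M^T.
Proof. by move=> Mb i j; rewrite mxE. Qed.

Lemma mx_deg_le_emulmx p q r a b (M : 'M[expr n]_(p, q)) (N : 'M[expr n]_(q, r)) :
  mx_deg_le a M -> mx_deg_le b N -> mx_deg_le (a + b) (emulmx M N).
Proof.
move=> Ma Nb i j; rewrite mxE; apply: expr_deg_esum; rewrite all_map.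
by apply/allP => h _ /=; apply: leq_add.
Qed.

Lemma expr_deg_edet r b (M : 'M[expr n]_r) : mx_deg_le b M ->
  (expr_deg (edet M) <= b * r)%N.
Proof.
move=> Mb; apply: expr_deg_esum; rewrite all_map; apply/allP => s _ /=.
rewrite expr_deg_esign -[X in (_ <= b * X)%N](size_enum_ord r).
rewrite -(size_map (fun i => M i (s i))); apply: expr_deg_eprod.
by rewrite all_map; apply/allP => i _ /=.
Qed.

Lemma mx_deg_le_eadj r b (M : 'M[expr n]_r) : mx_deg_le b M -> mx_deg_le (b * r.-1) (eadj M).
Proof.
move=> Mb i j; rewrite mxE expr_deg_esign.
by apply: expr_deg_edet => a a'; rewrite !mxE.
Qed.

End Expressions.
Arguments ezero {n}.

(** * Compilation into GJ programs *)

Section Compilation.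
Variable n : nat.

Definition gj_instr := (gj_op * gj_arg n * gj_arg n)%type.

Fixpoint gj_prepend (O : Type) (c : seq gj_instr) (p : gj n O) : gj n O :=
  if c is (o, a, b) :: c' then GStep o a b (gj_prepend c' p) else p.

Lemma gj_prepend_cat O c1 c2 (p : gj n O) :
  gj_prepend (c1 ++ c2) p = gj_prepend c1 (gj_prepend c2 p).
Proof. by elim: c1 => [|[[o a] b] c1 IH] //=; rewrite IH. Qed.

(* [compile s m e] is straight-line code evaluating [e] after [m] values have
   been computed, [EOne] standing for the value in slot [s]; its second
   component is the operand holding the result. *)
Fixpoint compile (s m : nat) (e : expr n) : seq gj_instr * gj_arg n :=
  match e with
  | EIn i => ([::], GIn i)
  | EOne => ([::], GVal s)
  | EBin o a b =>
      let ca := compile s m a in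
      let cb := compile s (m + size ca.1) b in
      (ca.1 ++ cb.1 ++ [:: (gj_op_of_bop o, ca.2, cb.2)],
       GVal (m + size ca.1 + size cb.1))
  end.

Section Run.
Variables (R : realType) (x : 'I_n -> R).

Lemma gj_get_cat vs ws a v : gj_get x vs a = Some v -> gj_get x (vs ++ ws) a = Some v.
Proof.
case: a => //= j; case: ifP => // lt [<-].
by rewrite size_cat nth_cat lt (leq_trans lt) // leq_addr.
Qed.

Lemma gj_get_rcons vs v : gj_get x (rcons vs v) (GVal (size vs)) = Some v.
Proof. by rewrite /= size_rcons ltnSn nth_rcons ltnn eqxx. Qed.

Lemma gj_run_if O vs a u (p1 p2 : gj n O) : gj_get x vs a = Some u ->
  gj_run x vs (GIf a p1 p2) = if 0 <= u then gj_run x vs p1 else gj_run x vs p2.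
Proof. by move=> /= ->. Qed.

Lemma gj_run_compile s e m vs : size vs = m -> (s < m)%N ->
  exists ws,
    [/\ size ws = size (compile s m e).1,
        forall O (p : gj n O),
          gj_run x vs (gj_prepend (compile s m e).1 p) = gj_run x (vs ++ ws) p
      & gj_get x (vs ++ ws) (compile s m e).2 = Some (expr_eval x (nth 0 vs s) e)].
Proof.
elim: e m vs => [i||o a IHa b IHb] m vs sz_vs lt_s /=.
- by exists [::]; rewrite cats0.
- by exists [::]; rewrite cats0 /= sz_vs lt_s.
have [wa [sz_wa run_a get_a]] := IHa m vs sz_vs lt_s.
have sz_vwa : size (vs ++ wa) = (m + size (compile s m a).1)%N by rewrite size_cat sz_vs sz_wa.
have [wb [sz_wb run_b get_b]] := IHb _ _ sz_vwa (leq_trans lt_s (leq_addr _ _)).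
rewrite nth_cat sz_vs lt_s in get_b.
set va := expr_eval _ _ a in get_a; set vb := expr_eval _ _ b in get_b.
exists (wa ++ wb ++ [:: bop_apply o va vb]); split.
- by rewrite !size_cat sz_wa sz_wb.
- move=> O p; rewrite !gj_prepend_cat run_a run_b /= (gj_get_cat wb get_a) get_b.
  by rewrite -cats1 -!catA; case: o.
- rewrite !catA cats1 -sz_wb -sz_vwa -size_cat.
  by case: o; apply: gj_get_rcons.
Qed.

End Run.
End Compilation.

(** * Symbolic execution *)

Section Polynomials.
Variables (R : realType) (n : nat).
Local Notation mp := {mpoly R[n]}.

Definition mpoly_var (i : 'I_n) : mp := 'X_i.

Lemma mdegree0 : mdegree (0 : mp) = 0%N.
Proof. by rewrite /mdegree msize0. Qed.

Lemma mdegree1 : mdegree (1 : mp) = 0%N.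
Proof. by rewrite /mdegree msize1. Qed.

Lemma mdegreeD (P Q : mp) : (mdegree (P + Q) <= maxn (mdegree P) (mdegree Q))%N.
Proof. by rewrite /mdegree -!subn1; have := msizeD_le P Q; lia. Qed.

Lemma mdegreeM (P Q : mp) : (mdegree (P * Q) <= mdegree P + mdegree Q)%N.
Proof.
have [->|nzP] := eqVneq P 0; first by rewrite mul0r mdegree0.
have [->|nzQ] := eqVneq Q 0; first by rewrite mulr0 mdegree0.
have sP : (0 < msize P)%N by rewrite lt0n msize_poly_eq0.
have sQ : (0 < msize Q)%N by rewrite lt0n msize_poly_eq0.
rewrite /mdegree msizeM // -!subn1.
by move: sP sQ; set a := mmeasure _ P; set b := mmeasure _ Q; lia.
Qed.

Lemma mdegree_bop_apply o (P Q : mp) :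
  (mdegree (bop_apply o P Q) <= bop_deg o (mdegree P) (mdegree Q))%N.
Proof.
case: o => /=; [exact: mdegreeD | | exact: mdegreeM].
by have := mdegreeD P (- Q); rewrite /mdegree msizeN.
Qed.

Lemma mdegree_expr_eval (c : mp) (e : expr n) : mdegree c = 0%N ->
  (mdegree (expr_eval mpoly_var c e) <= expr_deg e)%N.
Proof.
move=> c0; elim: e => [i||o a IHa b IHb] /=.
- by rewrite /mdegree /mpoly_var msizeX mdeg1.
- by rewrite c0.
- by apply: leq_trans (mdegree_bop_apply _ _ _) _; case: o => /=; lia.
Qed.

Definition ratf_rep (u : ratf R n) (P : mp) := u.2 != 0 /\ u.1 = P * u.2.

Lemma ratf_rep_var i : ratf_rep ('X_i, 1) (mpoly_var i).
Proof. by split; [exact: oner_neq0 | rewrite mulr1]. Qed.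

Lemma ratf_rep_bop o u v P Q : ratf_rep u P -> ratf_rep v Q ->
  ratf_rep (gj_sapply (gj_op_of_bop o) u v) (bop_apply o P Q).
Proof.
case=> u2 u1 [v2 v1]; split; first by case: o; rewrite /= mulf_neq0.
by case: o; rewrite /= u1 v1; ring.
Qed.

Lemma ratf_rep_num_neq0 u P : ratf_rep u P -> P != 0 -> u.1 != 0.
Proof. by case=> u2 -> nzP; rewrite mulf_neq0. Qed.

Lemma ratf_rep_divff u P : ratf_rep u P -> P != 0 -> ratf_rep (gj_sapply GDiv u u) 1.
Proof.
move=> rep_u nzP; have u1 := ratf_rep_num_neq0 rep_u nzP.
by case: rep_u => u2 _; split; rewrite /= ?mulf_neq0 // mul1r mulrC.
Qed.

Lemma ratf_deg_le_rep D u P : ratf_rep u P -> (mdegree P <= D)%N -> ratf_deg_le D u.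
Proof.
case=> u2 u1 leD; exists P, 1; split => //; first exact: oner_neq0.
  by rewrite /ratf_eq /= mulr1 u1 mulrC.
by rewrite mdegree1.
Qed.

Lemma ratf_deg_le_div D u v P Q : ratf_rep u P -> ratf_rep v Q -> Q != 0 ->
  (mdegree P <= D)%N -> (mdegree Q <= D)%N -> ratf_deg_le D (gj_sapply GDiv u v).
Proof.
case=> u2 u1 [v2 v1] nzQ leP leQ; exists P, Q; split => //.
by rewrite /ratf_eq /= u1 v1; ring.
Qed.

End Polynomials.

Arguments mdegree0 {R n}.
Arguments mdegree1 {R n}.

Section Symbolic.
Variables (R : realType) (n : nat) (O : Type).
Local Notation rf := (ratf R n).
Implicit Types (vs ws : seq rf).

Definition gj_bounded (D : nat) (L : seq rf) (vs : seq rf) (p : gj n O) : Prop :=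
  [/\ gj_wf vs p, forall u, u \in gj_values vs p -> ratf_deg_le D u
    & forall u, u \in gj_preds vs p -> exists2 v, v \in L & ratf_eq u v].

Variables (D : nat) (L : seq rf).

Lemma gj_bounded_out vs f : (forall o, gj_sget vs (f o) <> None) -> gj_bounded D L vs (GOut f).
Proof. by []. Qed.

Lemma gj_bounded_step vs o a b u v (p : gj n O) :
  gj_sget vs a = Some u -> gj_sget vs b = Some v -> (o = GDiv -> v.1 != 0) ->
  ratf_deg_le D (gj_sapply o u v) -> gj_bounded D L (rcons vs (gj_sapply o u v)) p ->
  gj_bounded D L vs (GStep o a b p).
Proof.
move=> get_a get_b div_ok deg_w [wf_p deg_p preds_p].
rewrite /gj_bounded /= get_a get_b; split => //.
- by split => // /div_ok /eqP.
- by move=> w; rewrite inE => /predU1P [->|/deg_p].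
Qed.

Lemma gj_bounded_if vs a u (p1 p2 : gj n O) :
  gj_sget vs a = Some u -> (exists2 v, v \in L & ratf_eq u v) ->
  gj_bounded D L vs p1 -> gj_bounded D L vs p2 -> gj_bounded D L vs (GIf a p1 p2).
Proof.
move=> get_a u_L [wf1 deg1 preds1] [wf2 deg2 preds2].
rewrite /gj_bounded /= get_a; split => //.
- by move=> w; rewrite mem_cat => /orP [/deg1|/deg2].
- by move=> w; rewrite inE mem_cat => /or3P [/eqP ->|/preds1|/preds2].
Qed.

Lemma gj_sget_cat vs ws a v : gj_sget vs a = Some v -> gj_sget (vs ++ ws) a = Some v.
Proof.
case: a => //= j; case: ifP => // lt [<-].
by rewrite size_cat nth_cat lt (leq_trans lt) // leq_addr.
Qed.

Lemma gj_sget_rcons vs v : gj_sget (rcons vs v) (GVal (size vs)) = Some v.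
Proof. by rewrite /= size_rcons ltnSn nth_rcons ltnn eqxx. Qed.

Lemma gj_bounded_compile s c e m vs :
  size vs = m -> (s < m)%N -> ratf_rep (nth (0, 1) vs s) c -> mdegree c = 0%N ->
  (expr_deg e <= D)%N ->
  exists ws,
    [/\ size ws = size (compile s m e).1,
        exists2 u, gj_sget (vs ++ ws) (compile s m e).2 = Some u &
                   ratf_rep u (expr_eval (@mpoly_var R n) c e)
      & forall p, gj_bounded D L (vs ++ ws) p ->
                  gj_bounded D L vs (gj_prepend (compile s m e).1 p)].
Proof.
move=> + + + c0; elim: e m vs => [i||o a IHa b IHb] m vs sz_vs lt_s rep_s leD /=.
- by exists [::]; rewrite cats0; split => //; exists ('X_i, 1); [|exact: ratf_rep_var].
- by exists [::]; rewrite cats0; split => //; exists (nth (0, 1) vs s); rewrite //= sz_vs lt_s.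
have [leDa leDb] := expr_deg_EBin o a b.
have [wa [sz_wa [ua get_a rep_a] bnd_a]] := IHa m vs sz_vs lt_s rep_s (leq_trans leDa leD).
have sz_vwa : size (vs ++ wa) = (m + size (compile s m a).1)%N by rewrite size_cat sz_vs sz_wa.
have rep_s' : ratf_rep (nth (0, 1) (vs ++ wa) s) c by rewrite nth_cat sz_vs lt_s.
have [wb [sz_wb [ub get_b rep_b] bnd_b]] :=
  IHb _ _ sz_vwa (leq_trans lt_s (leq_addr _ _)) rep_s' (leq_trans leDb leD).
set w := gj_sapply (gj_op_of_bop o) ua ub.
have rep_w : ratf_rep w (expr_eval (@mpoly_var R n) c (EBin o a b)) by exact: ratf_rep_bop.
have vs_w : (vs ++ wa) ++ wb ++ [:: w] = rcons ((vs ++ wa) ++ wb) w by rewrite -cats1 catA.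
exists (wa ++ wb ++ [:: w]); split.
- by rewrite !size_cat sz_wa sz_wb.
- exists w => //; rewrite catA vs_w -sz_wb -sz_vwa -size_cat.
  exact: gj_sget_rcons.
- move=> p bnd_p; rewrite !gj_prepend_cat; apply/bnd_a/bnd_b.
  apply: gj_bounded_step (gj_sget_cat wb get_a) get_b _ _ _; first by case: (o).
    by apply: ratf_deg_le_rep rep_w (leq_trans (mdegree_expr_eval _ c0) leD).
  by rewrite -vs_w -catA.
Qed.

End Symbolic.

(** * Gram matrices and row bases *)

Section GramMatrix.
Variable R : realFieldType.

Lemma mulmx_tr_eq0 d (u : 'rV[R]_d) : u *m u^T = 0 -> u = 0.
Proof.
move/matrixP/(_ 0 0); rewrite !mxE => uu0; apply/rowP => j; rewrite mxE.
have sq_ge0 (i : 'I_d) : true -> 0 <= u 0 i * u 0 i by rewrite -expr2 sqr_ge0.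
have /(psumr_eq0P sq_ge0)/(_ j isT)/eqP : \sum_i u 0 i * u 0 i = 0.
  by rewrite -[RHS]uu0; apply: eq_bigr => i _; rewrite mxE.
by rewrite mulf_eq0 orbb => /eqP.
Qed.

Lemma unitmx_gram m d (B : 'M[R]_(m, d)) : (B *m B^T \in unitmx) = row_free B.
Proof.
apply/idP/idP => [unitG | freeB].
  by rewrite /row_free eqn_leq rank_leq_row -{1}(mxrank_unit unitG) mxrankM_maxl.
rewrite -row_free_unit; apply: inj_row_free => v vG0; apply: (row_free_inj freeB).
rewrite mul0mx; apply: mulmx_tr_eq0.
by rewrite trmx_mul mulmxA -(mulmxA v) vG0 mul0mx.
Qed.

Lemma det_gram_neq0 m d (B : 'M[R]_(m, d)) : (\det (B *m B^T) != 0) = row_free B.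
Proof. by rewrite -unitfE -unitmxE unitmx_gram. Qed.

End GramMatrix.

Lemma mulmx_invmx_entry (F : fieldType) m r p (M : 'M[F]_(m, r)) (A : 'M[F]_r)
    (N : 'M[F]_(r, p)) i j :
  A \in unitmx -> (M *m invmx A *m N) i j = (M *m \adj A *m N) i j / \det A.
Proof. by move=> unitA; rewrite /invmx unitA -scalemxAr -scalemxAl mxE mulrC. Qed.

Lemma pinv_row_basis (R : realType) k d r (Z : 'M[R]_(k, d)) (B : 'M[R]_(r, d)) :
  row_free B -> (Z <= B)%MS -> (B <= Z)%MS ->
  exists2 X : 'M[R]_(d, k), is_pinv Z X & X *m Z = B^T *m invmx (B *m B^T) *m B.
Proof.
move=> freeB /submxP [A defZ] sBZ.
have rA : \rank A = r.
  apply/eqP; rewrite eqn_leq rank_leq_col /= -[X in (X <= _)%N](eqP freeB).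
  by apply: leq_trans (mxrankS sBZ) _; rewrite defZ mxrankM_maxl.
have freeAt : row_free A^T by rewrite /row_free mxrank_tr rA.
set G := B *m B^T; set H := A^T *m A.
have unitG : G \in unitmx by rewrite unitmx_gram.
have unitH : H \in unitmx by rewrite /H -[A in _ *m A]trmxK unitmx_gram.
have symG : G^T = G by rewrite /G trmx_mul trmxK.
have symH : H^T = H by rewrite /H trmx_mul trmxK.
pose X := B^T *m invmx G *m invmx H *m A^T.
have XZ : X *m Z = B^T *m invmx G *m B.
  by rewrite /X defZ !mulmxA -(mulmxA _ A^T) -/H (mulmxKV unitH).
have ZX : Z *m X = A *m invmx H *m A^T.
  by rewrite /X defZ !mulmxA -(mulmxA A B) -/G (mulmxK unitG).
exists X => //; split.
- by rewrite ZX defZ !mulmxA -(mulmxA _ A^T) -/H (mulmxKV unitH).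
- by rewrite XZ /X !mulmxA -(mulmxA _ B) -/G (mulmxKV unitG).
- by rewrite ZX !trmx_mul trmxK trmx_inv symH mulmxA.
- by rewrite XZ !trmx_mul trmxK trmx_inv symG mulmxA.
Qed.

Definition subrows (T : Type) k d (Z : 'M[T]_(k, d)) (A : {set 'I_k}) : 'M[T]_(#|A|, d) :=
  rowsub enum_val Z.

Lemma map_subrows (T T' : Type) (f : T -> T') k d (Z : 'M[T]_(k, d)) A :
  map_mx f (subrows Z A) = subrows (map_mx f Z) A.
Proof. exact: map_mxsub. Qed.

Section RowSubsets.
Variables (F : fieldType) (k d : nat) (Z : 'M[F]_(k, d)).
Implicit Types (A S T : {set 'I_k}).

Lemma row_sub_subrows A i : i \in A -> (row i Z <= subrows Z A)%MS.
Proof. by move=> iA; rewrite -(enum_rankK_in iA iA) -row_rowsub row_sub. Qed.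

Lemma subrows_subP m (C : 'M[F]_(m, d)) A :
  (forall i, i \in A -> (row i Z <= C)%MS) -> (subrows Z A <= C)%MS.
Proof. by move=> sAC; apply/row_subP => j; rewrite row_rowsub sAC // enum_valP. Qed.

Lemma subrows_sub A : (subrows Z A <= Z)%MS.
Proof. by apply: subrows_subP => i _; apply: row_sub. Qed.

Lemma subrowsS S T : S \subset T -> (subrows Z S <= subrows Z T)%MS.
Proof. by move/subsetP => sST; apply: subrows_subP => i /sST; apply: row_sub_subrows. Qed.

Lemma row_free_subrowsU1 S i : row_free (subrows Z S) -> ~~ (row i Z <= subrows Z S)%MS ->
  row_free (subrows Z (i |: S)).
Proof.
move=> freeS iS'; have iS : i \notin S by apply: contra iS' => /row_sub_subrows.
have ltS : (subrows Z S < subrows Z S + row i Z)%MS.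
  by rewrite ltmxE addsmxSl; apply: contra iS' => /(submx_trans (addsmxSr _ _)).
have leS : (subrows Z S + row i Z <= subrows Z (i |: S))%MS.
  by rewrite addsmx_sub subrowsS ?subsetUr // row_sub_subrows // setU11.
move: ltS; rewrite ltmxErank (eqP freeS) => /andP [_ ltS].
have card_iS : #|i |: S| = #|S|.+1 by rewrite cardsU1 iS.
apply/eqP/anti_leq; rewrite rank_leq_row [X in (X <= _)%N]card_iS.
exact: leq_trans ltS (mxrankS leS).
Qed.

Lemma row_sub_row_free_full S i : row_free (subrows Z S) -> #|S| = d ->
  (row i Z <= subrows Z S)%MS.
Proof. by move=> freeS Sd; apply: submx_full; rewrite /row_full (eqP freeS) Sd. Qed.

End RowSubsets.

Section Quotients.
Variables (n : nat) (O : eqType).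

Definition gj_update (f : O -> gj_arg n) (o : O) (a : gj_arg n) : O -> gj_arg n :=
  fun o' => if o' == o then a else f o'.

Fixpoint gj_quotients (num : O -> expr n) (aD : gj_arg n) (s : nat) (l : seq O) (m : nat)
    (f : O -> gj_arg n) : gj n O :=
  if l is o :: l' then
    let c := compile s m (num o) in
    gj_prepend c.1 (GStep GDiv c.2 aD
      (gj_quotients num aD s l' (m + size c.1).+1 (gj_update f o (GVal (m + size c.1)))))
  else GOut f.

Lemma gj_run_quotients (R : realType) (x : 'I_n -> R) num aD s D (g : O -> R) l m vs f :
  size vs = m -> (s < m)%N -> gj_get x vs aD = Some D -> D != 0 ->
  (forall o, o \notin l -> gj_get x vs (f o) = Some (g o)) ->
  (forall o, o \in l -> g o = expr_eval x (nth 0 vs s) (num o) / D) ->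
  exists2 out, gj_run x vs (gj_quotients num aD s l m f) = Some out &
               forall o, out o = Some (g o).
Proof.
elim: l m vs f => [|o l IH] m vs f sz_vs lt_s get_D D0 get_f def_g /=.
  by exists (fun o => gj_get x vs (f o)) => // o; rewrite get_f.
have [ws [sz_ws run_c get_c]] := gj_run_compile x (num o) sz_vs lt_s.
rewrite run_c /= get_c (gj_get_cat ws get_D) (negbTE D0) -(def_g o (mem_head _ _)).
have sz_vws : size (vs ++ ws) = (m + size (compile s m (num o)).1)%N.
  by rewrite size_cat sz_vs sz_ws.
apply: IH => //.
- by rewrite size_rcons sz_vws.
- by rewrite ltnS (leq_trans (ltnW lt_s)) ?leq_addr.
- by rewrite -cats1 -catA; apply: gj_get_cat.
- move=> o' o'l; rewrite /gj_update; case: eqP => [->|/eqP ne].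
    by rewrite -sz_vws gj_get_rcons.
  by rewrite -cats1 -catA; apply/gj_get_cat/get_f; rewrite inE negb_or ne.
- move=> o' lo'; rewrite nth_rcons size_cat sz_vs (leq_trans lt_s (leq_addr _ _)).
  by rewrite nth_cat sz_vs lt_s def_g // inE lo' orbT.
Qed.

Lemma gj_bounded_quotients (R : realType) D (L : seq (ratf R n)) num aD s c uD PD l m vs f :
  size vs = m -> (s < m)%N -> ratf_rep (nth (0, 1) vs s) c -> mdegree c = 0%N ->
  gj_sget vs aD = Some uD -> ratf_rep uD PD -> PD != 0 -> (mdegree PD <= D)%N ->
  (forall o, expr_deg (num o) <= D)%N ->
  (forall o, o \notin l -> gj_sget vs (f o) <> None) ->
  gj_bounded D L vs (gj_quotients num aD s l m f).
Proof.
move=> + + + c0 + rep_D PD0 degD deg_num.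
elim: l m vs f => [|o l IH] m vs f sz_vs lt_s rep_s get_D get_f /=.
  by apply: gj_bounded_out => o; apply: get_f.
have [ws [sz_ws [uN get_N rep_N] bnd_c]] :=
  gj_bounded_compile O L sz_vs lt_s rep_s c0 (deg_num o).
apply: bnd_c; apply: gj_bounded_step get_N (gj_sget_cat ws get_D) _ _ _.
- by move=> _; apply: ratf_rep_num_neq0 rep_D PD0.
- apply: ratf_deg_le_div rep_N rep_D PD0 _ degD.
  exact: leq_trans (mdegree_expr_eval _ c0) (deg_num o).
have sz_vws : size (vs ++ ws) = (m + size (compile s m (num o)).1)%N.
  by rewrite size_cat sz_vs sz_ws.
apply: IH.
- by rewrite size_rcons sz_vws.
- by rewrite ltnS (leq_trans (ltnW lt_s)) ?leq_addr.
- rewrite nth_rcons size_cat sz_vs (leq_trans lt_s (leq_addr _ _)).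
  by rewrite nth_cat sz_vs lt_s.
- by rewrite -cats1 -catA; apply: gj_sget_cat.
- move=> o' o'l; rewrite /gj_update; case: eqP => [_|/eqP ne].
    by rewrite -sz_vws gj_sget_rcons.
  have /get_f : o' \notin o :: l by rewrite inE negb_or ne.
  by case E: gj_sget => [v|] // _; rewrite -cats1 -catA (gj_sget_cat _ E).
Qed.

End Quotients.

Section ProjectionExpressions.
Variables k d : nat.
Local Notation n := (k * d)%N.
Implicit Types (A : {set 'I_k}).

Definition input_mx : 'M[expr n]_(k, d) := \matrix_(a, t) EIn (mxvec_index a t).

Definition gram_expr (A : {set 'I_k}) : 'M[expr n]_#|A| :=
  emulmx (subrows input_mx A) (subrows input_mx A)^T.

Definition gram_det_expr (A : {set 'I_k}) : expr n := edet (gram_expr A).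

(* GJ conditionals test [v >= 0], and [- (det G)^2 >= 0] iff the rows in [A] are
   linearly dependent. *)
Definition dep_test_expr (A : {set 'I_k}) : expr n :=
  EBin BSub ezero (EBin BMul (gram_det_expr A) (gram_det_expr A)).

Definition proj_num_expr (A : {set 'I_k}) (o : 'I_d * 'I_d) : expr n :=
  emulmx (emulmx (subrows input_mx A)^T (eadj (gram_expr A))) (subrows input_mx A) o.1 o.2.

Section Evaluation.
Variables (T : comPzRingType) (Z : 'M[T]_(k, d)).
Local Notation x := (fun i => mxvec Z 0 i).
Local Notation gram A := (subrows Z A *m (subrows Z A)^T).

Lemma eval_input_mx c : map_mx (expr_eval x c) input_mx = Z.
Proof. by apply/matrixP => a t; rewrite mxE [input_mx _ _]mxE /= mxvecE. Qed.

Lemma eval_gram_expr c A : map_mx (expr_eval x c) (gram_expr A) = gram A.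
Proof. by rewrite eval_emulmx -map_trmx !map_subrows eval_input_mx. Qed.

Lemma eval_gram_det_expr c A : (0 < #|A|)%N ->
  expr_eval x c (gram_det_expr A) = \det (gram A).
Proof. by move=> A0; rewrite eval_edet ?A0 // eval_gram_expr. Qed.

Lemma eval_dep_test_expr c A : (0 < #|A|)%N ->
  expr_eval x c (dep_test_expr A) = - \det (gram A) ^+ 2.
Proof. by move=> A0; rewrite /= eval_gram_det_expr // subrr sub0r expr2. Qed.

Lemma eval_proj_num_expr A o :
  expr_eval x 1 (proj_num_expr A o) =
  ((subrows Z A)^T *m \adj (gram A) *m subrows Z A) o.1 o.2.
Proof.
have -> : forall M : 'M[expr n]_d, expr_eval x 1 (M o.1 o.2) = map_mx (expr_eval x 1) M o.1 o.2.
  by move=> M; rewrite mxE.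
rewrite !eval_emulmx eval_eadj // eval_gram_expr.
by rewrite -map_trmx !map_subrows eval_input_mx.
Qed.

End Evaluation.

Lemma mx_deg_le_input_rows A : mx_deg_le 1 (subrows input_mx A).
Proof. by move=> i j; rewrite !mxE. Qed.

Lemma mx_deg_le_gram A : mx_deg_le 2 (gram_expr A).
Proof.
by apply: (mx_deg_le_emulmx (a := 1)); [|apply: mx_deg_le_tr]; apply: mx_deg_le_input_rows.
Qed.

Lemma expr_deg_gram_det A : (expr_deg (gram_det_expr A) <= 2 * #|A|)%N.
Proof. exact/expr_deg_edet/mx_deg_le_gram. Qed.

Lemma expr_deg_dep_test A : (expr_deg (dep_test_expr A) <= 4 * #|A|)%N.
Proof. by have := expr_deg_gram_det A; rewrite /= !max0n; lia. Qed.

Lemma expr_deg_proj_num A o : (0 < #|A|)%N -> (expr_deg (proj_num_expr A o) <= 2 * #|A|)%N.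
Proof.
move=> A0; have deg_in := @mx_deg_le_input_rows A.
have := mx_deg_le_emulmx (mx_deg_le_emulmx (mx_deg_le_tr deg_in)
  (mx_deg_le_eadj (@mx_deg_le_gram A))) deg_in o.1 o.2.
by rewrite /proj_num_expr; lia.
Qed.

End ProjectionExpressions.

Arguments input_mx {k d}.
Arguments gram_expr {k d} A.
Arguments gram_det_expr {k d} A.
Arguments dep_test_expr {k d} A.

Lemma oppr_sqr_ge0 (R : realDomainType) (a : R) : (0 <= - a ^+ 2) = (a == 0).
Proof. by rewrite oppr_ge0 -sqrf_eq0 eq_le sqr_ge0 andbT. Qed.

Section Programs.
Variables k d : nat.
Local Notation n := (k * d)%N.
Local Notation O := ('I_d * 'I_d)%type.
Implicit Types (A S : {set 'I_k}).

(* These programs expect the value 0 in slot 0.  Once the Gram determinant is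
   known to be nonzero, the slot holding det/det = 1 stands for [EOne]. *)
Definition gj_proj_rows A (m : nat) : gj n O :=
  if #|A| == 0%N then GOut (fun _ => GVal 0) else
  let cD := compile 0 m (gram_det_expr A) in
  let m1 := (m + size cD.1)%N in
  gj_prepend cD.1 (GStep GDiv cD.2 cD.2
    (gj_quotients (proj_num_expr A) cD.2 m1 (enum (@predT O)) m1.+1 (fun _ => GVal 0))).

Fixpoint gj_select_rows (l : seq 'I_k) S (m : nat) : gj n O :=
  if l is i :: l' then
    if (#|S| < d)%N then
      let c := compile 0 m (dep_test_expr (i |: S)) in
      gj_prepend c.1 (GIf c.2 (gj_select_rows l' S (m + size c.1))
                              (gj_select_rows l' (i |: S) (m + size c.1)))
    else gj_proj_rows S m
  else gj_proj_rows S m.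

Definition gj_pinv_proj (i0 : 'I_n) : gj n O :=
  GStep GSub (GIn i0) (GIn i0) (gj_select_rows (enum 'I_k) set0 1).

(* No k x d matrix has rank k when d < k. *)
Definition gj_pinv_proj_full_rank (i0 : 'I_n) : gj n O :=
  if (k <= d)%N then GStep GSub (GIn i0) (GIn i0) (gj_proj_rows setT 1)
  else GOut (fun _ => GIn i0).

Section Run.
Variables (R : realType) (Z : 'M[R]_(k, d)).
Local Notation x := (fun i => mxvec Z 0 i).

Definition gj_outputs_pinv_proj (vs : seq R) (p : gj n O) : Prop :=
  exists2 out, gj_run x vs p = Some out &
    exists2 X : 'M[R]_(d, k), is_pinv Z X & forall i j, out (i, j) = Some ((X *m Z) i j).

Lemma gj_run_proj_rows A m vs :
  size vs = m -> (0 < m)%N -> nth 0 vs 0 = 0 ->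
  row_free (subrows Z A) -> (Z <= subrows Z A)%MS ->
  gj_outputs_pinv_proj vs (gj_proj_rows A m).
Proof.
move=> sz_vs m0 vs0 freeA sZA.
have [X pinvX XZ] := pinv_row_basis freeA sZA (subrows_sub Z A).
set B := subrows Z A in freeA XZ *.
rewrite /gj_proj_rows; case: eqP => [A0|/eqP A0].
  have B0 : B = 0 by apply/matrixP => -[a lt_a] t; exfalso; rewrite A0 in lt_a.
  exists (fun=> gj_get x vs (GVal 0)) => //; exists X => // i j.
  by rewrite /= sz_vs m0 vs0 XZ B0 mulmx0 mxE.
rewrite /gj_outputs_pinv_proj; cbv zeta; set cD := compile 0 m _.
have [ws [sz_ws run_D get_D]] := gj_run_compile x (gram_det_expr A) sz_vs m0.
rewrite -/cD eval_gram_det_expr ?lt0n // -/B in sz_ws run_D get_D.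
have D0 : \det (B *m B^T) != 0 by rewrite det_gram_neq0.
rewrite run_D /= get_D (negbTE D0) /=.
set vs' := rcons _ _.
have sz_vs' : size vs' = (m + size cD.1).+1.
  by rewrite size_rcons size_cat sz_vs sz_ws.
have get_D' : gj_get x vs' cD.2 = Some (\det (B *m B^T)).
  by rewrite /vs' -cats1; apply: gj_get_cat.
have one_slot : nth 0 vs' (m + size cD.1) = 1.
  by rewrite nth_rcons size_cat sz_vs sz_ws ltnn eqxx divff.
have XZ_entry o : o \in enum (@predT O) ->
    (X *m Z) o.1 o.2 = expr_eval x (nth 0 vs' (m + size cD.1)) (proj_num_expr A o) /
                       \det (B *m B^T).
  by rewrite one_slot eval_proj_num_expr -/B XZ -mulmx_invmx_entry // unitmx_gram.
have all_o o : o \notin enum (@predT O) -> gj_get x vs' (GVal 0) = Some ((X *m Z) o.1 o.2).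
  by rewrite mem_enum.
have [out run_out out_XZ] := gj_run_quotients sz_vs' (ltnSn _) get_D' D0 all_o XZ_entry.
by exists out => //; exists X.
Qed.

Lemma gj_run_select_rows l S m vs :
  size vs = m -> (0 < m)%N -> nth 0 vs 0 = 0 ->
  row_free (subrows Z S) -> (#|S| <= d)%N ->
  (forall i, i \notin l -> (row i Z <= subrows Z S)%MS) ->
  gj_outputs_pinv_proj vs (gj_select_rows l S m).
Proof.
elim: l S m vs => [|i l IH] S m vs sz_vs m0 vs0 freeS Sd done_rows; cbn [gj_select_rows].
  by apply: gj_run_proj_rows => //; apply/row_subP => i; apply: done_rows.
case: ltnP => [Sd'|dS]; last first.
  apply: gj_run_proj_rows => //; apply/row_subP => j.
  by apply: row_sub_row_free_full => //; apply/eqP; rewrite eqn_leq Sd dS.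
set c := compile 0 m _.
have [ws [sz_ws run_t get_t]] := gj_run_compile x (dep_test_expr (i |: S)) sz_vs m0.
have iS0 : (0 < #|i |: S|)%N by rewrite (cardsD1 i) setU11.
rewrite -/c eval_dep_test_expr // in sz_ws run_t get_t.
rewrite /gj_outputs_pinv_proj run_t (gj_run_if _ _ get_t) oppr_sqr_ge0.
rewrite -[_ == 0]negbK det_gram_neq0.
have sz_vws : size (vs ++ ws) = (m + size c.1)%N by rewrite size_cat sz_vs sz_ws.
have m0' : (0 < m + size c.1)%N by rewrite (leq_trans m0) ?leq_addr.
have vs0' : nth 0 (vs ++ ws) 0 = 0 by rewrite nth_cat sz_vs m0.
have done_i j : j \notin l -> j != i -> j \notin i :: l by rewrite inE negb_or => -> ->.
case: ifPn => [notfree|/negPn freeSi].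
  apply: IH => // j jl; have [->|ne] := eqVneq j i; last exact: done_rows (done_i j jl ne).
  exact: contraNT (row_free_subrowsU1 freeS) notfree.
have Sd1 : (#|i |: S| <= d)%N.
  by rewrite cardsU1; apply: leq_trans (leq_add (leq_b1 _) (leqnn _)) Sd'.
apply: IH => // j jl.
have [->|ne] := eqVneq j i; first by apply: row_sub_subrows; rewrite setU11.
exact: submx_trans (done_rows j (done_i j jl ne)) (subrowsS Z (subsetUr _ _)).
Qed.

End Run.
End Programs.

Arguments gj_proj_rows {k d} A m.
Arguments gj_select_rows {k d} l S m.
Arguments gj_pinv_proj {k d} i0.
Arguments gj_pinv_proj_full_rank {k d} i0.

Section SymbolicPrograms.
Variables (R : realType) (k d : nat).
Local Notation n := (k * d)%N.
Local Notation O := ('I_d * 'I_d)%type.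
Local Notation X := (@mpoly_var R n).
Implicit Types (A S : {set 'I_k}).

Lemma gram_det_poly_neq0 c A : (0 < #|A|)%N -> (#|A| <= d)%N ->
  expr_eval X c (gram_det_expr (d := d) A) != 0.
Proof.
move=> A0 Ad.
pose Z0 : 'M[R]_(k, d) :=
  \matrix_(a, t) [exists j : 'I_#|A|, (enum_val j == a) && (j == t :> nat)]%:R.
have rows_Z0 : subrows Z0 A = pid_mx #|A|.
  apply/matrixP => j t; rewrite !mxE ltn_ord andbT; congr (nat_of_bool _)%:R.
  apply/existsP/idP => [[j' /andP[/eqP/enum_val_inj -> //]]|jt].
  by exists j; rewrite eqxx.
have gram_Z0 : subrows Z0 A *m (subrows Z0 A)^T = 1%:M.
  by rewrite rows_Z0 tr_pid_mx mul_pid_mx minnn (minn_idPr Ad) pid_mx_1.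
pose x0 i := mxvec Z0 0 i.
apply/eqP => /(congr1 (meval x0)).
rewrite meval0 (expr_eval_rmorph (f := meval x0) (y := x0)).
  by rewrite eval_gram_det_expr // gram_Z0 det1 => /eqP; rewrite oner_eq0.
by move=> i; exact: mevalXU.
Qed.

Definition dep_tests : seq (ratf R n) :=
  [seq (expr_eval X 0 (dep_test_expr A), 1) | A <- enum (powerset [set: 'I_k])].

Lemma size_dep_tests : size dep_tests = (2 ^ k)%N.
Proof. by rewrite size_map -cardE card_powerset cardsT card_ord. Qed.

Lemma gj_bounded_proj_rows D (L : seq (ratf R n)) A m (vs : seq (ratf R n)) :
  size vs = m -> (0 < m)%N -> ratf_rep (nth (0, 1) vs 0) 0 ->
  (#|A| <= d)%N -> (2 * #|A| <= D)%N ->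
  gj_bounded D L vs (gj_proj_rows (d := d) A m).
Proof.
move=> sz_vs m0 rep0 Ad AD; rewrite /gj_proj_rows; case: eqP => [_|/eqP].
  by apply: gj_bounded_out => o; rewrite /= sz_vs m0.
rewrite -lt0n => A0.
have degD := leq_trans (expr_deg_gram_det d A) AD.
cbv zeta; set cD := compile 0 m _.
have [ws [sz_ws [uD get_D rep_D] bnd_D]] :=
  gj_bounded_compile O L sz_vs m0 rep0 mdegree0 degD.
have D0 := gram_det_poly_neq0 0 A0 Ad.
have mdegD := leq_trans (mdegree_expr_eval _ (@mdegree0 R n)) degD.
apply/bnd_D/(gj_bounded_step get_D get_D).
- by move=> _; apply: ratf_rep_num_neq0 rep_D D0.
- by apply: ratf_deg_le_rep (ratf_rep_divff rep_D D0) _; rewrite mdegree1.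
apply: (gj_bounded_quotients L _ _ _ mdegree1 _ rep_D D0 mdegD).
- by rewrite size_rcons size_cat sz_vs sz_ws.
- exact: ltnSn.
- by rewrite nth_rcons size_cat sz_vs sz_ws ltnn eqxx; apply: ratf_rep_divff rep_D D0.
- by rewrite -cats1; apply: gj_sget_cat.
- by move=> o; apply: leq_trans (expr_deg_proj_num o A0) AD.
- by move=> o; rewrite mem_enum.
Qed.

Lemma gj_bounded_select_rows D l S m (vs : seq (ratf R n)) :
  size vs = m -> (0 < m)%N -> ratf_rep (nth (0, 1) vs 0) 0 -> (#|S| <= d)%N ->
  (4 * k <= D)%N -> gj_bounded D dep_tests vs (gj_select_rows (d := d) l S m).
Proof.
move=> + + + + kD; have card_le A : (#|A| <= k)%N by rewrite -[X in (_ <= X)%N]card_ord max_card.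
elim: l S m vs => [|i l IH] S m vs sz_vs m0 rep0 Sd; cbn [gj_select_rows].
  by apply: gj_bounded_proj_rows => //; have := card_le S; lia.
case: ltnP => [Sd'|_]; last by apply: gj_bounded_proj_rows => //; have := card_le S; lia.
set c := compile 0 m _.
have deg_t : (expr_deg (dep_test_expr (d := d) (i |: S)) <= D)%N.
  by have := expr_deg_dep_test d (i |: S); have := card_le (i |: S); lia.
have [ws [sz_ws [u get_t rep_t] bnd_t]] :=
  gj_bounded_compile O dep_tests sz_vs m0 rep0 mdegree0 deg_t.
have sz_vws : size (vs ++ ws) = (m + size c.1)%N by rewrite size_cat sz_vs sz_ws.
have m0' : (0 < m + size c.1)%N by rewrite (leq_trans m0) ?leq_addr.
have rep0' : ratf_rep (nth (0, 1) (vs ++ ws) 0) 0 by rewrite nth_cat sz_vs m0.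
apply: bnd_t; apply: gj_bounded_if get_t _ _ _.
- exists (expr_eval X 0 (dep_test_expr (i |: S)), 1).
    by apply: map_f; rewrite mem_enum powersetE subsetT.
  by rewrite /ratf_eq /= mulr1; case: rep_t.
- exact: IH.
apply: IH => //; rewrite cardsU1.
exact: leq_trans (leq_add (leq_b1 _) (leqnn _)) Sd'.
Qed.

End SymbolicPrograms.

Section PinvProjPrograms.
Variables (R : realType) (k d : nat) (i0 : 'I_(k * d)).
Local Notation n := (k * d)%N.

Lemma gj_run_pinv_proj (Z : 'M[R]_(k, d)) : gj_outputs_pinv_proj Z [::] (gj_pinv_proj i0).
Proof.
rewrite /gj_outputs_pinv_proj /=.
apply: (@gj_run_select_rows _ _ _ Z _ _ _ [:: mxvec Z 0 i0 - mxvec Z 0 i0]) => //=.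
- by rewrite subrr.
- by rewrite /row_free eqn_leq rank_leq_row [X in (X <= _)%N]cards0.
- by rewrite cards0.
- by move=> i; rewrite mem_enum.
Qed.

Lemma gj_run_pinv_proj_full_rank (Z : 'M[R]_(k, d)) : \rank Z = k ->
  gj_outputs_pinv_proj Z [::] (gj_pinv_proj_full_rank i0).
Proof.
move=> rkZ; rewrite /gj_pinv_proj_full_rank; case: leqP => [kd|]; last first.
  by have := rank_leq_col Z; rewrite rkZ leqNgt => /negbTE ->.
have sZ : (Z <= subrows Z setT)%MS by apply/row_subP => i; apply: row_sub_subrows.
rewrite /gj_outputs_pinv_proj /=.
apply: (@gj_run_proj_rows _ _ _ Z _ _ [:: mxvec Z 0 i0 - mxvec Z 0 i0]) => //=.
- by rewrite subrr.
rewrite /row_free eqn_leq rank_leq_row [X in (X <= _)%N]cardsT [X in (X <= _)%N]card_ord.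
by rewrite -[X in (X <= _)%N]rkZ mxrankS.
Qed.

Lemma ratf_rep_zero_slot : ratf_rep (gj_sapply GSub ('X_i0, 1) ('X_i0, 1)) (0 : {mpoly R[n]}).
Proof.
rewrite -(subrr (@mpoly_var R n i0)).
exact: (ratf_rep_bop BSub (ratf_rep_var R i0) (ratf_rep_var R i0)).
Qed.

Lemma gj_bounded_pinv_proj : gj_bounded (4 * k) (dep_tests R k d) [::] (gj_pinv_proj i0).
Proof.
apply: (gj_bounded_step (u := ('X_i0, 1)) (v := ('X_i0, 1))) => //.
  by apply: ratf_deg_le_rep ratf_rep_zero_slot _; rewrite mdegree0.
by apply: gj_bounded_select_rows; rewrite ?cards0 //; exact: ratf_rep_zero_slot.
Qed.

Lemma gj_bounded_pinv_proj_full_rank :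
  gj_bounded (4 * k) [::] ([::] : seq (ratf R n)) (gj_pinv_proj_full_rank i0).
Proof.
rewrite /gj_pinv_proj_full_rank; case: leqP => kd; last exact: gj_bounded_out.
apply: (gj_bounded_step (u := ('X_i0, 1)) (v := ('X_i0, 1))) => //.
  by apply: ratf_deg_le_rep ratf_rep_zero_slot _; rewrite mdegree0.
apply: gj_bounded_proj_rows; rewrite ?cardsT ?card_ord //; first exact: ratf_rep_zero_slot.
lia.
Qed.

End PinvProjPrograms.

Theorem lemma5p2 (R : realType) :
  exists C : nat, forall k d : nat, (1 <= k)%N -> (1 <= d)%N ->
    (exists p : gj (k * d) ('I_d * 'I_d),
       [/\ gj_computes_pinv_proj (fun _ : 'M[R]_(k, d) => True) p,
           gj_degree_le R (C * k) p
         & gj_predcomp_le R (2 ^ k) p]) /\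
    (exists p : gj (k * d) ('I_d * 'I_d),
       [/\ gj_computes_pinv_proj (fun Z : 'M[R]_(k, d) => \rank Z = k) p,
           gj_degree_le R (C * k) p
         & gj_predcomp_le R 0 p]).
Proof.
exists 4%N => k d k1 d1.
have i0 : 'I_(k * d) by exists 0%N; rewrite muln_gt0 k1 d1.
split.
- have [wf deg preds] := gj_bounded_pinv_proj R i0.
  exists (gj_pinv_proj i0); split => //.
    by split => // Z _; apply: gj_run_pinv_proj.
  by exists (dep_tests R k d); rewrite size_dep_tests.
- have [wf deg preds] := gj_bounded_pinv_proj_full_rank R i0.
  exists (gj_pinv_proj_full_rank i0); split => //; last by exists [::].
  by split => // Z; apply: gj_run_pinv_proj_full_rank.
Qed.
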